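(* Let $H$ be an abelian group with an alternating $\mathbb{Z}$-bilinear form $\langle-,-\rangle\neq0$, and let $z\in\ker\mu$. Let $\omega\in C^3(\mathbb{Q}[H])_{(z)}$ be the cochain with $\omega([u],[v],[w])=\langle u,v\rangle$ if $u+v+w=z$ and $\omega([u],[v],[w])=0$ otherwise (for $u,v,w\in H$); $\omega$ is a 3-cocycle, and so is its restriction to $\mathbb{Q}[H^{(1)}]$. If $z$ is a torsion element (i.e. $nz=0$ for some $n\in\mathbb{Z}\setminus\{0\}$), then $[\omega]\neq0$ in $H^3(\mathbb{Q}[H])_{(z)}$. If $z$ is not a torsion element, then the class of the restriction of $\omega$ is $0$ in $H^3(\mathbb{Q}[H^{(1)}])_{(z)}$.
   Context: $\mu:H\to\mathrm{Hom}_{\mathbb{Z}}(H,\mathbb{Z})$, $\mu(x)(y)=\langle x,y\rangle$; $H^{(1)}:=H\setminus\ker\mu$. $\mathbb{Q}[S]$ ($S\subset H$) is the $\mathbb{Q}$-vector space with basis symbols $[x]$, $x\in S$; $\mathbb{Q}[H]$ is a Lie algebra via $[[x],[y]]=\langle x,y\rangle[x+y]$ and $\mathbb{Q}[H^{(1)}]$ is a Lie subalgebra. For a Lie algebra $\mathfrak g$, $C^p(\mathfrak g)=\mathrm{Hom}_{\mathbb{Q}}(\bigwedge^p\mathfrak g,\mathbb{Q})$ is the Chevalley–Eilenberg cochain complex with trivial coefficients, with $d\eta(x_1,\dots,x_{p+1})=\sum_{i<j}(-1)^{i+j}\eta([x_i,x_j],x_1,\dots,\widehat{x_i},\dots,\widehat{x_j},\dots,x_{p+1})$.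 For $S\in\{H,H^{(1)}\}$, $p>0$, $C^p(\mathbb{Q}[S])_{(z)}$ is the subcomplex of cochains vanishing on $([u_1],\dots,[u_p])$, $u_i\in S$, whenever $u_1+\cdots+u_p\neq z$, and $H^p(\mathbb{Q}[S])_{(z)}$ is its cohomology. *)

From mathcomp Require Import all_boot all_algebra.
Set Implicit Arguments. Unset Strict Implicit. Unset Printing Implicit Defensive.
Import GRing.Theory.
Local Open Scope ring_scope.

(* Cochains on the Lie algebra Q[S] (S a subset of H) are represented by
   their values on basis symbols [x], x in S: an element of
   C^p(Q[S]) = Hom(/\^p Q[S], Q) is the same as an alternating function
   S^p -> Q.  Values of the Rocq functions outside S are irrelevant. *)

Section LieCochains.
Context {H : zmodType}.

Definition is_bilinear (b : H -> H -> int) : Prop :=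
  (forall x y w, b (x + y) w = b x w + b y w) /\
  (forall x y w, b x (y + w) = b x y + b x w).

Definition is_alternating (b : H -> H -> int) : Prop := forall x, b x x = 0.

Definition in_ker_mu (b : H -> H -> int) (x : H) : Prop := forall y, b x y = 0.

Definition H1 (b : H -> H -> int) : H -> Prop := fun x => ~ in_ker_mu b x.

Definition is_torsion (z : H) : Prop := exists n : int, n != 0 /\ z *~ n = 0.

Definition cochain2_z (S : H -> Prop) (z : H) (eta : H -> H -> rat) : Prop :=
  (forall x, S x -> eta x x = 0) /\
  (forall x y, S x -> S y -> eta x y = - eta y x) /\
  (forall x y, S x -> S y -> x + y != z -> eta x y = 0).

(* Chevalley--Eilenberg differential C^2 -> C^3 on basis elements, with
   [[x],[y]] = <x,y>[x+y] (indices 1-based as in the paper's formula). *)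
Definition d2 (b : H -> H -> int) (eta : H -> H -> rat) (x1 x2 x3 : H) : rat :=
  - (b x1 x2)%:~R * eta (x1 + x2) x3
  + (b x1 x3)%:~R * eta (x1 + x3) x2
  - (b x2 x3)%:~R * eta (x2 + x3) x1.

Definition d3 (b : H -> H -> int) (om : H -> H -> H -> rat) (x1 x2 x3 x4 : H) : rat :=
  - (b x1 x2)%:~R * om (x1 + x2) x3 x4
  + (b x1 x3)%:~R * om (x1 + x3) x2 x4
  - (b x1 x4)%:~R * om (x1 + x4) x2 x3
  - (b x2 x3)%:~R * om (x2 + x3) x1 x4
  + (b x2 x4)%:~R * om (x2 + x4) x1 x3
  - (b x3 x4)%:~R * om (x3 + x4) x1 x2.

Definition omega (b : H -> H -> int) (z : H) (u v w : H) : rat :=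
  if u + v + w == z then (b u v)%:~R else 0.

Definition omega_cocycle (S : H -> Prop) (b : H -> H -> int) (z : H) : Prop :=
  forall x1 x2 x3 x4, S x1 -> S x2 -> S x3 -> S x4 ->
    d3 b (omega b z) x1 x2 x3 x4 = 0.

Definition omega_class_zero (S : H -> Prop) (b : H -> H -> int) (z : H) : Prop :=
  exists eta : H -> H -> rat, cochain2_z S z eta /\
    forall u v w, S u -> S v -> S w -> omega b z u v w = d2 b eta u v w.

End LieCochains.

From mathcomp Require Import all_boot all_algebra.
From mathcomp Require Import boolp classical_sets.
From mathcomp Require Import ring lra.
(* If d eta = omega, then g u := eta u (z - u) - 1 satisfies g (u + v) = g u + g v
   whenever <u, v> <> 0, and g (z - u) = - g u - 2.  As z is in ker mu, the
   increment g (w + z) - g w is the same for every w pairing nontrivially with a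
   fixed y, so g (w + m z) = g w + m c; when m z = 0 this forces c = 0, and then
   g (z - x) = g (- x) = - g x contradicts g (z - x) = - g x - 2.
   If z has infinite order, the map z *~ k |-> k extends to an additive
   phi : H -> rat because rat is divisible (Zorn's lemma on graphs of partial
   homomorphisms), and eta x y := 1 - 2 phi x on the pairs with x + y = z is a
   primitive of omega on all of Q[H]. *)

Set Implicit Arguments.
Unset Strict Implicit.
Unset Printing Implicit Defensive.
Import GRing.Theory Num.Theory.
Local Open Scope ring_scope.
Local Open Scope classical_set_scope.

Lemma torsion_natP (H : zmodType) (z : H) :
  is_torsion z -> exists2 m, (0 < m)%N & z *+ m = 0.
Proof.
case=> n [n0 nz0]; case: n n0 nz0 => m m0 mz0.
  by exists m; rewrite // lt0n; apply: contra m0 => /eqP ->.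
by exists m.+1 => //; apply/eqP; rewrite -oppr_eq0; apply/eqP.
Qed.

Section RatExtension.
Variable H : zmodType.

(* The empty set qualifies, so the union of an empty chain is allowed in Zorn's
   lemma. *)
Definition hom_graph (A : set (H * rat)) : Prop :=
  (forall h q q', A (h, q) -> A (h, q') -> q = q') /\
  (forall h q h' q', A (h, q) -> A (h', q') -> A (h - h', q - q')).

Section HomGraph.
Variables (A : set (H * rat)) (hA : hom_graph A).

Lemma hom_graph_fun h q q' : A (h, q) -> A (h, q') -> q = q'.
Proof. exact: hA.1. Qed.

Lemma hom_graphB h q h' q' : A (h, q) -> A (h', q') -> A (h - h', q - q').
Proof. exact: hA.2. Qed.

Hypothesis hom_graph0 : A (0, 0).

Lemma hom_graphN h q : A (h, q) -> A (- h, - q).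
Proof. by move=> /(hom_graphB hom_graph0); rewrite !sub0r. Qed.

Lemma hom_graphD h q h' q' : A (h, q) -> A (h', q') -> A (h + h', q + q').
Proof. by move=> Ahq /hom_graphN /(hom_graphB Ahq); rewrite !opprK. Qed.

Lemma hom_graphMz h q k : A (h, q) -> A (h *~ k, q *~ k).
Proof.
have Mn n : A (h, q) -> A (h *+ n, q *+ n).
  move=> Ahq; elim: n => [|n IH]; first by rewrite !mulr0n; exact: hom_graph0.
  by rewrite !mulrS; apply: hom_graphD.
by case: k => n Ahq; rewrite ?NegzE ?mulrNz; [|apply: hom_graphN]; apply: Mn.
Qed.

Lemma hom_graph_slope h : exists c : rat, forall i r, A (h *~ i, r) -> r = c *~ i.
Proof.
have [[m [r [m0 Amr]]]|no_mult] := pselect (exists m r, m != 0 /\ A (h *~ m, r)).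
  exists (r / m%:~R) => i r' Air'.
  have m0' : m%:~R != 0 :> rat by rewrite intr_eq0.
  have := hom_graphMz m Air'; rewrite mulrzAC.
  move=> /hom_graph_fun /(_ (hom_graphMz i Amr)).
  rewrite -(mulrzr r') -(mulrzr r) -(mulrzr (r / _)) => hr'.
  by apply: (mulIf m0'); rewrite hr'; field.
exists 0 => i r Air; rewrite mul0rz.
have [i0|i0] := eqVneq i 0; last by case: no_mult; exists i, r.
by move: Air; rewrite i0 mulr0z => /hom_graph_fun; apply; exact: hom_graph0.
Qed.

Definition adjoin h c : set (H * rat) :=
  fun p => exists d q j, A (d, q) /\ p = (d + h *~ j, q + c *~ j).

Lemma sub_adjoin h c : A `<=` adjoin h c.
Proof. by move=> [d q] Adq; exists d, q, 0; rewrite !mulr0z !addr0. Qed.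

Lemma adjoin_gen h c : adjoin h c (h, c).
Proof. by exists 0, 0, 1; rewrite !mulr1z !add0r; split => //; exact: hom_graph0. Qed.

Lemma hom_graph_adjoin h c : (forall i r, A (h *~ i, r) -> r = c *~ i) ->
  hom_graph (adjoin h c).
Proof.
move=> slope; split.
- move=> _ _ _ [d [q [j [Adq [-> ->]]]]] [d' [q' [j' [Adq' [ed ->]]]]].
  have edd : d' - d = h *~ (j - j').
    by apply/eqP; rewrite mulrzBr subr_eq addrAC (addrC (h *~ j) d) ed addrK.
  by have := hom_graphB Adq' Adq; rewrite edd => /slope; rewrite (mulrzBr c); lra.
- move=> _ _ _ _ [d [q [j [Adq [-> ->]]]]] [d' [q' [j' [Adq' [-> ->]]]]].
  exists (d - d'), (q - q'), (j - j'); split; first exact: hom_graphB.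
  by congr pair; [rewrite (mulrzBr h) | rewrite (mulrzBr c)]; rewrite opprD addrACA.
Qed.

End HomGraph.

Lemma hom_graph_bigcup (F : set (set (H * rat))) :
  F `<=` hom_graph -> total_on F subset -> hom_graph (\bigcup_(X in F) X).
Proof.
move=> Fhom tot; split.
- move=> h q q' [X FX Xq] [Y FY Yq'].
  have [XY|YX] := tot X Y FX FY.
    by apply: (hom_graph_fun (Fhom _ FY)) Yq'; exact: XY.
  by apply: (hom_graph_fun (Fhom _ FX)) Xq _; exact: YX.
- move=> h q h' q' [X FX Xq] [Y FY Yq'].
  have [XY|YX] := tot X Y FX FY.
    by exists Y => //; apply: (hom_graphB (Fhom _ FY)) Yq'; exact: XY.
  by exists X => //; apply: (hom_graphB (Fhom _ FX)) Xq _; exact: YX.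
Qed.

Lemma hom_graph_extend (A : set (H * rat)) : hom_graph A -> A (0, 0) ->
  exists2 phi : H -> rat, {morph phi : x y / x + y} &
    forall h q, A (h, q) -> phi h = q.
Proof.
move=> hA A0.
pose P B := hom_graph B /\ ((exists p, B p) -> A `<=` B).
have [M [[hM AM_ne] maxM]] : exists M, P M /\ forall B, M `<` B -> ~ P B.
  apply: Zorn_bigcup => F FP tot; split.
    by apply: hom_graph_bigcup => // X /FP[].
  move=> [p [X FX Xp]] t At; exists X => //.
  by apply: (FP X FX).2 At; exists p.
have M00 : M (0, 0).
  apply: contrapT => nM0; apply: (maxM A); last by split=> // _.
  split=> [[h q] Mhq|/(_ _ A0) //]; case: nM0.
  by rewrite -(subrr h) -(subrr q); exact (hom_graphB hM Mhq Mhq).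
have AM : A `<=` M by apply: AM_ne; exists (0, 0).
have dom h : exists q, M (h, q).
  apply: contrapT => ndom; have [c slope] := hom_graph_slope hM M00 h.
  apply: (maxM (adjoin M h c)).
    split; first exact: sub_adjoin.
    by move=> /(_ _ (adjoin_gen M00 h c)) Mhc; apply: ndom; exists c.
  split; first exact: hom_graph_adjoin.
  by move=> _; apply: subset_trans (sub_adjoin _ _).
have [phi Mphi] := choice dom.
exists phi => [x y|h q Ahq].
  exact (hom_graph_fun hM (Mphi _) (hom_graphD hM M00 (Mphi x) (Mphi y))).
exact (hom_graph_fun hM (Mphi h) (AM _ Ahq)).
Qed.

Definition multiples_graph (z : H) : set (H * rat) :=
  fun p => exists k : int, p = (z *~ k, k%:~R).

Lemma hom_graph_multiples z : ~ is_torsion z -> hom_graph (multiples_graph z).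
Proof.
move=> ntz; split.
  move=> _ _ _ [k [-> ->]] [k' [/eqP ekk' ->]]; congr intr.
  apply/eqP; rewrite -subr_eq0; apply: contraT => kk'0; case: ntz.
  by exists (k - k'); split=> //; apply/eqP; rewrite mulrzBr subr_eq0.
move=> _ _ _ _ [k [-> ->]] [k' [-> ->]].
by exists (k - k'); rewrite mulrzBr intrB.
Qed.

Lemma nontorsion_hom_to_rat z : ~ is_torsion z ->
  exists2 phi : H -> rat, {morph phi : x y / x + y} & phi z = 1.
Proof.
move=> ntz; have [|phi phiD phi_z] := hom_graph_extend (hom_graph_multiples ntz).
  by exists 0; rewrite mulr0z.
by exists phi => //; apply: phi_z; exists 1; rewrite mulr1z.
Qed.

End RatExtension.

Section AlternatingForm.
Variables (H : zmodType) (b : H -> H -> int).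
Hypotheses (hbil : is_bilinear b) (halt : is_alternating b).

Lemma formDl x y w : b (x + y) w = b x w + b y w. Proof. exact: hbil.1. Qed.
Lemma formDr w x y : b w (x + y) = b w x + b w y. Proof. exact: hbil.2. Qed.

Lemma form0l w : b 0 w = 0.
Proof. by apply: (addrI (b 0 w)); rewrite -formDl !addr0. Qed.
Lemma form0r w : b w 0 = 0.
Proof. by apply: (addrI (b w 0)); rewrite -formDr !addr0. Qed.

Lemma formNl x w : b (- x) w = - b x w.
Proof. by apply/eqP; rewrite -addr_eq0 addrC -formDl subrr form0l. Qed.
Lemma formNr w x : b w (- x) = - b w x.
Proof. by apply/eqP; rewrite -addr_eq0 addrC -formDr subrr form0r. Qed.

Lemma formC x y : b y x = - b x y.
Proof.
move: (halt (x + y)); rewrite formDl !formDr !halt add0r addr0 => /eqP.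
by rewrite addrC addr_eq0 => /eqP.
Qed.

Definition nonorth_additive (g : H -> rat) :=
  forall u v, b u v != 0 -> g (u + v) = g u + g v.

Lemma nonorth_additiveN g x y : nonorth_additive g -> b x y != 0 ->
  g (- x) = - g x.
Proof.
move=> gD bxy.
have := gD x (y - x); rewrite formDr formNr halt subr0 addrC subrK => /(_ bxy).
have := gD (- x) y; rewrite formNl oppr_eq0 addrC => /(_ bxy).
lra.
Qed.

Section KernelElement.
Variables (z : H) (hz : in_ker_mu b z).

Lemma form_addzl x y : b (x + z) y = b x y.
Proof. by rewrite formDl hz addr0. Qed.
Lemma form_addzr x y : b x (y + z) = b x y.
Proof. by rewrite formDr (formC z x) hz oppr0 addr0. Qed.

Lemma form_rotate u v w : u + v + w = z -> b v w = b u v.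
Proof.
move=> huvw; have -> : w = z - (u + v) by rewrite -huvw addrC addKr.
by rewrite formDr (formC z v) hz formNr formDr halt (formC v u); ring.
Qed.

Lemma omegaE_sum s p q r : p + q + r = s ->
  omega b z p q r = if s == z then (b p q)%:~R else 0.
Proof. by rewrite /omega => ->. Qed.

Lemma omega_d3_eq0 x1 x2 x3 x4 : d3 b (omega b z) x1 x2 x3 x4 = 0.
Proof.
set s := x1 + x2 + x3 + x4.
rewrite /d3 (@omegaE_sum s (x1 + x2)) //.
rewrite (@omegaE_sum s (x1 + x3)); last by rewrite (addrAC x1 x3 x2).
rewrite (@omegaE_sum s (x1 + x4)).
  2: by rewrite (addrAC x1 x4 x2) (addrAC _ x4 x3).
rewrite (@omegaE_sum s (x2 + x3)); last by rewrite (addrC _ x1) addrA.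
rewrite (@omegaE_sum s (x2 + x4)).
  2: by rewrite (addrC _ x1) addrA (addrAC _ x4 x3).
rewrite (@omegaE_sum s (x3 + x4)).
  2: by rewrite (addrC _ x1) addrA (addrAC _ x4 x2) (addrAC x1 x3 x2).
case: eqP => hs; last by rewrite !mulr0; ring.
have -> : x4 = z - (x1 + x2 + x3) by rewrite -hs /s addrC addKr.
rewrite !(formDl, formDr, formNl, formNr) !halt !(formC z) !hz.
rewrite (formC x1 x2) (formC x1 x3) (formC x2 x3); ring.
Qed.

Lemma omega_is_cocycle S : omega_cocycle S b z.
Proof. by move=> *; apply: omega_d3_eq0. Qed.

Lemma nonorth_additive_shift g w y : nonorth_additive g -> b w y != 0 ->
  g (w + z) - g w = g (y + z) - g y.
Proof.
move=> gD bwy.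
have := gD w (y + z); rewrite form_addzr => /(_ bwy).
have := gD (w + z) y; rewrite form_addzl => /(_ bwy).
rewrite addrAC -addrA; lra.
Qed.

Lemma nonorth_additive_shiftn g w y k : nonorth_additive g -> b w y != 0 ->
  g (w + z *+ k) = g w + (g (y + z) - g y) *+ k.
Proof.
move=> gD; elim: k w => [|k IH] w bwy; first by rewrite !mulr0n !addr0.
have bwzy : b (w + z) y != 0 by rewrite form_addzl.
rewrite mulrS addrA IH // -(nonorth_additive_shift gD bwy) mulrS; ring.
Qed.

Lemma nonorth_additive_torsion g w y : nonorth_additive g -> is_torsion z ->
  b w y != 0 -> g (w + z) = g w.
Proof.
move=> gD /torsion_natP[m m_gt0 mz0] bwy.
have := nonorth_additive_shiftn m gD bwy; rewrite mz0 addr0 => /eqP.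
rewrite -subr_eq0 opprD addrA subrr add0r oppr_eq0 mulrn_eq0 gtn_eqF //=.
by rewrite -(nonorth_additive_shift gD bwy) subr_eq0 => /eqP.
Qed.

Definition antidiag (eta : H -> H -> rat) u := eta u (z - u) - 1.

Section Coboundary.
Variable eta : H -> H -> rat.
Hypothesis eta_anti : forall x y, eta x y = - eta y x.
Hypothesis hE : forall u v w, omega b z u v w = d2 b eta u v w.

Lemma coboundary_oppz u : antidiag eta (z - u) = - antidiag eta u - 2.
Proof.
have zzu : z - (z - u) = u by rewrite opprB addrC subrK.
by rewrite /antidiag zzu eta_anti; ring.
Qed.

Lemma coboundary_nonorth_additive : nonorth_additive (antidiag eta).
Proof.
move=> u v buv; pose w := z - (u + v).
have huvw : u + v + w = z by rewrite /w addrC subrK.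
have huw : u + w = z - v by rewrite -huvw (addrAC u v w) addrK.
have hvw : v + w = z - u by rewrite -huvw -(addrA u v w) (addrC u) addrK.
have bvw : b v w = b u v := form_rotate huvw.
have hvwu : v + w + u = z by rewrite addrC addrA.
have buw : b u w = - b u v by rewrite (formC w u) (form_rotate hvwu) bvw.
move: (hE u v w); rewrite /omega huvw eqxx /d2 huw hvw bvw buw.
rewrite (eta_anti (z - v)) (eta_anti (z - u)) -/w intrN.
have buv0 : (b u v)%:~R != 0 :> rat by rewrite intr_eq0.
rewrite /antidiag; move: (eta _ w) (eta u _) (eta v _) => e0 e1 e2 E.
apply: (mulfI buv0); move: E buv0; move: (b u v)%:~R => B E _.
lra.
Qed.

End Coboundary.

Lemma omega_class_nonzero_torsion : (exists x y, b x y != 0) -> is_torsion z ->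
  ~ omega_class_zero (fun _ => True) b z.
Proof.
move=> [x [y bxy]] tz [eta [[_ [eta_antiT _]] hET]].
have eta_anti u v : eta u v = - eta v u by exact: eta_antiT.
have gD := coboundary_nonorth_additive eta_anti (fun u v w => hET u v w I I I).
have bNxy : b (- x) y != 0 by rewrite formNl oppr_eq0.
have := nonorth_additive_torsion gD tz bNxy.
rewrite (addrC (- x)) (coboundary_oppz eta_anti) (nonorth_additiveN gD bxy).
lra.
Qed.

Lemma omega_class_zero_hom S (phi : H -> rat) :
  {morph phi : x y / x + y} -> phi z = 1 -> omega_class_zero S b z.
Proof.
move=> phiD phi_z.
pose eta x y : rat := if x + y == z then 1 - 2 * phi x else 0.
exists eta; split; first split.
- move=> x _; rewrite /eta; case: eqP => // xxz.
  by have := phiD x x; rewrite xxz phi_z; lra.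
- split=> [x y _ _|x y _ _]; rewrite /eta; last by move=> /negbTE ->.
  rewrite (addrC y x); case: eqP => [xyz|_]; last by rewrite oppr0.
  by have := phiD x y; rewrite xyz phi_z; lra.
move=> u v w _ _ _; rewrite /omega /d2 /eta.
rewrite (addrAC u w v) (addrC (v + w) u) addrA.
case: eqP => [uvwz|_]; last by rewrite !mulr0; ring.
have vwuz : v + w + u = z by rewrite addrC addrA.
have phi_w : phi w = 1 - phi u - phi v.
  by have := phiD (u + v) w; rewrite uvwz phi_z phiD; lra.
rewrite (formC w u) (form_rotate vwuz) (form_rotate uvwz) !phiD phi_w intrN.
ring.
Qed.

End KernelElement.
End AlternatingForm.

Theorem theorem5p4 (H : zmodType) (b : H -> H -> int)
  (hbil : is_bilinear b) (halt : is_alternating b)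
  (hnz : exists x y : H, b x y != 0)
  (z : H) (hz : in_ker_mu b z) :
  omega_cocycle (fun _ : H => True) b z /\
  omega_cocycle (H1 b) b z /\
  (is_torsion z -> ~ omega_class_zero (fun _ : H => True) b z) /\
  (~ is_torsion z -> omega_class_zero (H1 b) b z).
Proof.
split; first exact: omega_is_cocycle.
split; first exact: omega_is_cocycle.
split; first exact: omega_class_nonzero_torsion.
move=> /nontorsion_hom_to_rat[phi phiD phi_z].
exact: omega_class_zero_hom phiD phi_z.
Qed.
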